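(* Let $m\ge 2$ and $N\ge 1$ be integers, let $J_1,\dots,J_{m-1}\in\{1,-1\}$, and let $\zeta^-_1,\dots,\zeta^-_{m-1}\in\mathcal{P}_N^-$ and $f^+\in\mathcal{P}_N^+$ with $f^+(0)\neq 0$. Consider the system of conditions, for an unknown vector $(x_1,\dots,x_m)^T$ of functions on $\mathbb{T}$, \[ \begin{cases} \zeta^-_k\,x_m - J_k\, f^+\,\widetilde{x_k}\in\mathcal{P}^+, & k=1,\dots,m-1,\\ \zeta^-_1x_1+\zeta^-_2x_2+\dots+\zeta^-_{m-1}x_{m-1}+f^+\,\widetilde{x_m}\in\mathcal{P}^+. \end{cases} \] Let $\mathbf{u}=(u_1,\dots,u_m)^T\in(\mathcal{P}_N^+)^{m\times 1}$ and $\mathbf{v}=(v_1,\dots,v_m)^T\in(\mathcal{P}_N^+)^{m\times 1}$ be two (possibly identical) solutions of this system, i.e. all conditions hold when $x_i=u_i$ for all $i$, and also when $x_i=v_i$ for all $i$. Then \[ \sum_{k=1}^{m-1}J_k\,u_k\,\widetilde{v_k}+\widetilde{u_m}\,v_m \] is a constant function on $\mathbb{T}$.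
   Context: $\mathbb{T}=\{z\in\mathbb{C}:|z|=1\}$. $\mathcal{P}$ denotes the set of Laurent polynomials $P(z)=\sum_{k=-n}^{m}p_kz^k$ (with complex coefficients, viewed as functions on $\mathbb{T}$), and $\mathcal{P}^+$ the set of (ordinary) polynomials $\sum_{k\ge 0}p_kz^k$. $\mathcal{P}_N$ is the set of Laurent polynomials $\sum_{k=-n}^{m}p_kz^k$ with $0\le n,m\le N$, and $\mathcal{P}_N^+=\mathcal{P}_N\cap\mathcal{P}^+$. For $P(z)=\sum_{k=-n}^m p_kz^k$, $\widetilde{P}(z)=\sum_{k=-n}^m\overline{p_k}z^{-k}$ (so $\widetilde{P}(z)=\overline{P(z)}$ for $z\in\mathbb{T}$). $\mathcal{P}_N^-=\{P:\widetilde{P}\in\mathcal{P}_N^+\}$. *)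

From HB Require Import structures.
From mathcomp Require Import all_boot all_order all_algebra.
From mathcomp Require Import complex.
From mathcomp Require Import reals.
Set Implicit Arguments. Unset Strict Implicit. Unset Printing Implicit Defensive.
Import Order.TTheory GRing.Theory Num.Theory.
Local Open Scope ring_scope.

(* Laurent polynomials are viewed as functions on the unit circle T.
   Since a Laurent polynomial is determined by its restriction to T,
   a function f : C -> C "is" a Laurent polynomial when it agrees on T
   with one. For P in the Laurent ring, tilde P (z) = conj (P z) on T. *)

Definition onT (R : realType) (z : R[i]) : Prop := `|z| = 1.

Definition inPplus (R : realType) (f : R[i] -> R[i]) : Prop :=
  exists q : {poly R[i]}, forall z, onT z -> f z = q.[z].

Definition inPNplus (R : realType) (N : nat) (f : R[i] -> R[i]) : Prop :=
  exists q : {poly R[i]}, (size q <= N.+1)%N /\ forall z, onT z -> f z = q.[z].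

Definition inPNminus (R : realType) (N : nat) (f : R[i] -> R[i]) : Prop :=
  inPNplus N (fun z => (f z)^*).

(* x = (x_1,...,x_m) (indices 1..m of a nat-indexed family) solves the system *)
Definition solves (R : realType) (m : nat) (J : nat -> R[i])
  (zeta : nat -> R[i] -> R[i]) (fp : R[i] -> R[i]) (x : nat -> R[i] -> R[i]) : Prop :=
  (forall k, (1 <= k <= m.-1)%N ->
     inPplus (fun z => zeta k z * x m z - J k * fp z * (x k z)^*)) /\
  inPplus (fun z => \sum_(1 <= k < m) zeta k z * x k z + fp z * (x m z)^*).

From HB Require Import structures.
From mathcomp Require Import all_boot all_order all_algebra.
From mathcomp Require Import complex reals ring.
Import Order.TTheory GRing.Theory Num.Theory.
Set Implicit Arguments. Unset Strict Implicit. Unset Printing Implicit Defensive.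
Local Open Scope ring_scope.

(* Write S = sum_k J_k u_k conj(v_k) + conj(u_m) v_m. On the unit circle
   conj(p(z)) z^N is a polynomial in z whenever deg p <= N, so z^N S is a
   polynomial. Multiplying the last equation of the system for u by v_m and
   the first m-1 equations for v by u_k and subtracting, the zeta_k cancel
   and f^+ S is a polynomial; as f^+(0) <> 0, z^N and f^+ are coprime, so S
   is itself a polynomial. Since the J_k are real, conj(S) is the same
   expression with u and v swapped, hence a polynomial too, and a polynomial
   whose conjugate on the circle is again a polynomial is constant. *)

Section UnitCircle.
Variable C : numClosedFieldType.
Implicit Types (z : C) (p q : {poly C}) (F G : C -> C).

Lemma conjC_unit_circle z : `|z| = 1 -> z^* = z^-1.
Proof. by move=> z1; rewrite invC_norm z1 expr1n invr1 mul1r. Qed.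

Lemma unit_circle_neq0 z : `|z| = 1 -> z != 0.
Proof. by move=> z1; rewrite -normr_eq0 z1 oner_eq0. Qed.

(* w / conj(w) with w = n + i: infinitely many distinct points of the circle. *)
Definition cayley (n : nat) : C := (n%:R + 'i) / (n%:R + 'i)^*.

Lemma natCi_neq0 n : n%:R + 'i != 0 :> C.
Proof.
have := nonRealCi C; apply: contraNneq => /eqP.
by rewrite addrC addr_eq0 => /eqP ->; rewrite rpredN realn.
Qed.

Lemma norm_cayley n : `|cayley n| = 1.
Proof. by rewrite normf_div norm_conjC divff // normr_eq0 natCi_neq0. Qed.

Lemma cayley_inj : injective cayley.
Proof.
move=> a b /eqP; rewrite eqr_div ?conjC_eq0 ?natCi_neq0 //.
rewrite !rmorphD /= !conjC_nat conjCi => /eqP eq_ab.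
have : ('i *+ 2 : C) * (b%:R - a%:R) = 0.
  have -> : ('i *+ 2 : C) * (b%:R - a%:R) =
      (a%:R + 'i) * (b%:R - 'i) - (b%:R + 'i) * (a%:R - 'i) by ring.
  by rewrite eq_ab subrr.
move/eqP; rewrite mulf_eq0 mulrn_eq0 /= (negbTE (neq0Ci C)) subr_eq0 eqr_nat.
by move/eqP.
Qed.

Lemma poly_unit_circle_eq p q :
  (forall z, `|z| = 1 -> p.[z] = q.[z]) -> p = q.
Proof.
move=> eq_pq; apply/eqP; rewrite -subr_eq0; apply/negPn/negP => nz_pq.
pose rs := map cayley (iota 0 (size (p - q))).
have rs_roots : all (root (p - q)) rs.
  by apply/allP => _ /mapP[n _ ->]; rewrite /root !hornerE eq_pq ?norm_cayley ?subrr.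
have rs_uniq : uniq rs by rewrite map_inj_uniq ?iota_uniq //; apply: cayley_inj.
by have := max_poly_roots nz_pq rs_roots rs_uniq; rewrite size_map size_iota ltnn.
Qed.

(* The reflection of p with respect to degree n: z^n conj(p(1/conj z)). *)
Definition reflectp (n : nat) p := \poly_(i < n.+1) (p`_(n - i))^*.

Lemma size_reflectp n p : (size (reflectp n p) <= n.+1)%N.
Proof. exact: size_poly. Qed.

Lemma horner_reflectp n p z : (size p <= n.+1)%N -> `|z| = 1 ->
  (reflectp n p).[z] = (p.[z])^* * z ^+ n.
Proof.
move=> size_p z1; rewrite (horner_coef_wide z size_p) horner_poly.
rewrite rmorph_sum mulr_suml (reindex_inj rev_ord_inj) /=.
apply: eq_bigr => i _; have le_in : (i <= n)%N by rewrite -ltnS.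
rewrite subSS subKn // rmorphM rmorphXn /= (conjC_unit_circle z1) exprVn.
by rewrite exprB ?unitfE ?unit_circle_neq0 // mulrA mulrAC.
Qed.

Definition circle_poly F : Prop :=
  exists p : {poly C}, forall z, `|z| = 1 -> F z = p.[z].

Lemma circle_poly_ext F G :
  circle_poly F -> (forall z, `|z| = 1 -> F z = G z) -> circle_poly G.
Proof. by move=> [p Fp] FG; exists p => z z1; rewrite -FG ?Fp. Qed.

Lemma circle_poly_horner p : circle_poly (horner p).
Proof. by exists p. Qed.

Lemma circle_poly_const (c : C) : circle_poly (fun _ => c).
Proof. by exists c%:P => z _; rewrite hornerC. Qed.

Lemma circle_poly_add F G :
  circle_poly F -> circle_poly G -> circle_poly (fun z => F z + G z).
Proof. by move=> [p Fp] [q Gq]; exists (p + q) => z z1; rewrite hornerD Fp ?Gq. Qed.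

Lemma circle_poly_sub F G :
  circle_poly F -> circle_poly G -> circle_poly (fun z => F z - G z).
Proof.
by move=> [p Fp] [q Gq]; exists (p - q) => z z1; rewrite hornerD hornerN Fp ?Gq.
Qed.

Lemma circle_poly_mul F G :
  circle_poly F -> circle_poly G -> circle_poly (fun z => F z * G z).
Proof. by move=> [p Fp] [q Gq]; exists (p * q) => z z1; rewrite hornerM Fp ?Gq. Qed.

Lemma circle_poly_sum (a b : nat) (F : nat -> C -> C) :
  (forall k, (a <= k < b)%N -> circle_poly (F k)) ->
  circle_poly (fun z => \sum_(a <= k < b) F k z).
Proof.
elim: b => [|b IH] FP.
  by apply: circle_poly_ext (circle_poly_const 0) _ => z _; rewrite big_geq.
have [le_ab | lt_ba] := leqP a b; last first.
  by apply: circle_poly_ext (circle_poly_const 0) _ => z _; rewrite big_geq.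
apply: circle_poly_ext (circle_poly_add (IH _) (FP b _)) _.
- by move=> k /andP[ak kb]; apply: FP; rewrite ak ltnS ltnW.
- by rewrite le_ab leqnn.
- by move=> z _; rewrite big_nat_recr.
Qed.

Lemma circle_poly_conj_mulXn n p : (size p <= n.+1)%N ->
  circle_poly (fun z => (p.[z])^* * z ^+ n).
Proof. by move=> size_p; exists (reflectp n p) => z z1; rewrite horner_reflectp. Qed.

(* Since f(0) <> 0, X^n and f are coprime, so X^n divides the polynomial
   representing z^n F by Gauss's lemma. *)
Lemma circle_poly_divXn (f : {poly C}) n F : f.[0] != 0 ->
  circle_poly (fun z => F z * z ^+ n) -> circle_poly (fun z => f.[z] * F z) ->
  circle_poly F.
Proof.
move=> f0 [g Fg] [h Fh].
have fg : f * g = h * 'X^n.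
  by apply: poly_unit_circle_eq => z z1; rewrite !hornerM hornerXn -Fg // -Fh // mulrA.
have Xn_g : 'X^n %| g.
  have cop : coprimep 'X^n f.
    by apply: coprimep_expl; rewrite coprimep_sym coprimepX /root f0.
  by rewrite -(Gauss_dvdpr _ cop) fg dvdp_mull.
exists (g %/ 'X^n) => z z1; apply: (mulIf (expf_neq0 n (unit_circle_neq0 z1))).
by rewrite Fg // -{1}(divpK Xn_g) hornerM hornerXn.
Qed.

(* If F = g and conj F = h on the circle, then g X^(size h) is the reflection
   of h, whose size is at most size h + 1; so g is constant. *)
Lemma circle_poly_conj_const F :
  circle_poly F -> circle_poly (fun z => (F z)^*) ->
  exists c, forall z, `|z| = 1 -> F z = c.
Proof.
move=> [g Fg] [h Fh].
have gh : g * 'X^(size h) = reflectp (size h) h.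
  apply: poly_unit_circle_eq => z z1.
  by rewrite hornerM hornerXn horner_reflectp // -Fh // conjCK Fg.
have size_g : (size g <= 1)%N.
  have [-> | nz_g] := eqVneq g 0; first by rewrite size_poly0.
  by have := size_reflectp (size h) h; rewrite -gh size_mulXn // -addn1 leq_add2l.
by exists g`_0 => z z1; rewrite Fg // {1}(size1_polyC size_g) hornerC.
Qed.

End UnitCircle.

Section Pairing.
Variables (R : realType) (m : nat) (J : nat -> R[i]).
Implicit Types (a b : nat -> {poly R[i]}) (z : R[i]).

Definition pairing a b z :=
  \sum_(1 <= k < m) J k * (a k).[z] * ((b k).[z])^* + ((a m).[z])^* * (b m).[z].

Lemma conj_pairing a b z : (forall k, (1 <= k < m)%N -> (J k)^* = J k) ->
  (pairing a b z)^* = pairing b a z.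
Proof.
move=> J_real; rewrite /pairing rmorphD rmorph_sum /= rmorphM /= conjCK mulrC.
congr (_ + _); apply: eq_big_nat => k k_range.
by rewrite !rmorphM /= conjCK J_real //; ring.
Qed.

Lemma circle_poly_pairing_mulXn N a b : (0 < m)%N ->
  (forall k, (1 <= k <= m)%N -> (size (a k) <= N.+1)%N) ->
  (forall k, (1 <= k <= m)%N -> (size (b k) <= N.+1)%N) ->
  circle_poly (fun z => pairing a b z * z ^+ N).
Proof.
move=> m_gt0 size_a size_b.
have sum_part : circle_poly (fun z =>
    \sum_(1 <= k < m) J k * (a k).[z] * (((b k).[z])^* * z ^+ N)).
  apply: circle_poly_sum => k /andP[k1 km].
  have size_bk : (size (b k) <= N.+1)%N by rewrite size_b // k1 ltnW.
  exact: circle_poly_mul (circle_poly_mul (circle_poly_const (J k))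
    (circle_poly_horner (a k))) (circle_poly_conj_mulXn size_bk).
have last_part : circle_poly (fun z => ((a m).[z])^* * z ^+ N * (b m).[z]).
  have size_am : (size (a m) <= N.+1)%N by rewrite size_a // m_gt0 leqnn.
  exact: circle_poly_mul (circle_poly_conj_mulXn size_am) (circle_poly_horner (b m)).
apply: circle_poly_ext (circle_poly_add sum_part last_part) _ => z _.
by rewrite /pairing mulrDl mulr_suml; congr (_ + _); [apply: eq_bigr => k _ |]; ring.
Qed.

Variables (zeta : nat -> R[i] -> R[i]) (f : {poly R[i]}).

Lemma mul_pairing a b z :
  f.[z] * pairing a b z =
  (b m).[z] * (\sum_(1 <= k < m) zeta k z * (a k).[z] + f.[z] * ((a m).[z])^*)
  - \sum_(1 <= k < m) (a k).[z] * (zeta k z * (b m).[z] - J k * f.[z] * ((b k).[z])^*).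
Proof.
rewrite /pairing !mulrDr !mulr_sumr addrAC -sumrB.
by congr (_ + _); [apply: eq_bigr => k _ |]; ring.
Qed.

Lemma circle_poly_mul_pairing a b :
  solves m J zeta (fun z => f.[z]) (fun k z => (a k).[z]) ->
  solves m J zeta (fun z => f.[z]) (fun k z => (b k).[z]) ->
  circle_poly (fun z => f.[z] * pairing a b z).
Proof.
move=> [_ last_a] [first_b _].
apply: circle_poly_ext _ (fun z _ => esym (mul_pairing a b z)).
apply: circle_poly_sub (circle_poly_mul (circle_poly_horner (b m)) last_a) _.
apply: circle_poly_sum => k /andP[k1 km].
apply: circle_poly_mul (circle_poly_horner _) (first_b k _).
by rewrite k1 -ltnS (ltn_predK km).
Qed.

End Pairing.

Theorem lemma1 (R : realType) (m N : nat) (hm : (2 <= m)%N) (hN : (1 <= N)%N)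
  (J : nat -> R[i]) (hJ : forall k, (1 <= k <= m.-1)%N -> J k = 1 \/ J k = -1)
  (zeta : nat -> R[i] -> R[i])
  (hzeta : forall k, (1 <= k <= m.-1)%N -> inPNminus N (zeta k))
  (fp : {poly R[i]}) (hfp : (size fp <= N.+1)%N) (hfp0 : fp.[0] != 0)
  (u v : nat -> {poly R[i]})
  (hu : forall k, (1 <= k <= m)%N -> (size (u k) <= N.+1)%N)
  (hv : forall k, (1 <= k <= m)%N -> (size (v k) <= N.+1)%N)
  (hsu : solves m J zeta (fun z => fp.[z]) (fun k z => (u k).[z]))
  (hsv : solves m J zeta (fun z => fp.[z]) (fun k z => (v k).[z])) :
  exists c : R[i], forall z : R[i], onT z ->
    \sum_(1 <= k < m) J k * (u k).[z] * ((v k).[z])^* + ((u m).[z])^* * (v m).[z] = c.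
Proof.
have m_gt0 : (0 < m)%N by apply: ltnW.
have J_real k : (1 <= k < m)%N -> (J k)^* = J k.
  case/andP=> k1 km.
  have k_range : (1 <= k <= m.-1)%N by rewrite k1 -ltnS (ltn_predK km).
  by case: (hJ k k_range) => ->; rewrite ?rmorphN rmorph1.
have Suv : circle_poly (pairing m J u v) := circle_poly_divXn hfp0
  (circle_poly_pairing_mulXn J m_gt0 hu hv) (circle_poly_mul_pairing hsu hsv).
have Svu : circle_poly (pairing m J v u) := circle_poly_divXn hfp0
  (circle_poly_pairing_mulXn J m_gt0 hv hu) (circle_poly_mul_pairing hsv hsu).
have [c Sc] := circle_poly_conj_const Suv
  (circle_poly_ext Svu (fun z _ => esym (conj_pairing u v z J_real))).
by exists c.
Qed.
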